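(* Let $\Omega\subset\mathbb{R}^n$ be a nonempty closed convex set and $f:\mathbb{R}^n\to\mathbb{R}$ differentiable over $\Omega$ such that (i) $f(\bm{x})\ge\underline{f}$ for all $\bm{x}\in\Omega$, (ii) $\|\nabla f(\bm{x})-\nabla f(\bm{y})\|_2\le L\|\bm{x}-\bm{y}\|_2$ for all $\bm{x},\bm{y}\in\Omega$ for some $L>0$, and (iii) the relaxation sequence $\{\omega_k\}\subset[0,\infty)$ satisfies $\sum_{k=0}^\infty\omega_k<\infty$. Suppose $\{\bm{x}_k\}$ is generated by either IGPM without line search or IGPM with line search (described in the context). Then every limit point $\bm{x}^*$ of $\{\bm{x}_k\}$ is a first-order optimal solution of $\min_{\bm{x}\in\Omega}f(\bm{x})$, i.e., $\bm{x}^*=\mathcal{P}_\Omega(\bm{x}^*-\beta\nabla f(\bm{x}^* ))$ (equivalently $-\nabla f(\bm{x}^* )\in\mathcal{N}(\bm{x}^*|\Omega)$).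
   Context: $\mathcal{P}_\Omega$ is Euclidean projection onto $\Omega$ and $\mathcal{N}(\bm{x}|\Omega)$ the normal cone. For $\bm{x}_k\in\Omega$ write $\bm{g}_k=\nabla f(\bm{x}_k)$, $\bm{v}_k=\bm{x}_k-\beta\bm{g}_k$ for a fixed $\beta>0$, and define $p(\bm{z};\bm{x}_k)=\tfrac12\|\bm{z}-\bm{v}_k\|_2^2+\delta_\Omega(\bm{z})$ ($\delta_\Omega$ the $0/+\infty$ indicator of $\Omega$), $\Delta p(\bm{z};\bm{x}_k)=p(\bm{x}_k;\bm{x}_k)-p(\bm{z};\bm{x}_k)$, and $q(\bm{u};\bm{x}_k)=-\tfrac12\|\bm{u}-\bm{v}_k\|_2^2-\delta_\Omega^*(\bm{u})+\tfrac12\|\bm{v}_k\|_2^2$ with $\delta^*_\Omega(\bm{u})=\sup_{\bm{x}\in\Omega}\langle\bm{x},\bm{u}\rangle$. An inexact projection at iteration $k$ is a point $\bm{z}_k\in\Omega$ with $\Delta p(\bm{z}_k;\bm{x}_k)\ge0$ together with some dual point $\bm{u}_k$ such that $\frac{p(\bm{x}_k;\bm{x}_k)-p(\bm{z}_k;\bm{x}_k)+\omega_k}{p(\bm{x}_k;\bm{x}_k)-q(\bm{u}_k;\bm{x}_k)+\omega_k}\ge\gamma$, where $0<\gamma<1$. IGPM without line search: $0<\beta\le1/L$, $\bm{x}_0\in\Omega$, and $\bm{x}_{k+1}=\bm{z}_k$ for all $k$. IGPM with line search: fix $0<\eta<1$, $0<\alpha\le1$, $\beta>0$, $0<\theta<1$,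 $\bm{x}_0\in\Omega$; set $\bm{d}_k=\bm{z}_k-\bm{x}_k$, let $\alpha_k$ be the largest value in $\{\theta^i\alpha: i=0,1,2,\dots\}$ with $f(\bm{x}_k+\alpha_k\bm{d}_k)\le f(\bm{x}_k)+\eta\alpha_k\bm{g}_k^T\bm{d}_k$, and set $\bm{x}_{k+1}=\bm{x}_k+\alpha_k\bm{d}_k$. The algorithms are considered as generating infinite sequences. *)

From HB Require Import structures.
From mathcomp Require Import all_boot all_order all_algebra.
From mathcomp Require Import all_classical all_reals all_analysis.
Set Implicit Arguments. Unset Strict Implicit. Unset Printing Implicit Defensive.
Import Order.TTheory GRing.Theory Num.Theory.
Import numFieldNormedType.Exports.
Local Open Scope classical_set_scope.
Local Open Scope ring_scope.

Section IGPM.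
Variables (R : realType) (n : nat).
Notation vec := 'rV[R]_n.

Definition dotv (u v : vec) : R := \sum_(i < n) u 0 i * v 0 i.
Definition norm2 (u : vec) : R := Num.sqrt (dotv u u).

Definition convexR (Om : set vec) : Prop :=
  convex_set (Om : set (convex_lmodType vec)).

Definition grad (f : vec -> R) (x : vec) : vec :=
  \row_(i < n) ('d f x (delta_mx 0 i : vec)).

Definition is_proj (Om : set vec) (v z : vec) : Prop :=
  Om z /\ forall y, Om y -> norm2 (z - v) <= norm2 (y - v).

Definition indic (Om : set vec) (z : vec) : \bar R :=
  if `[< Om z >] then 0%E else +oo%E.

Definition supp (Om : set vec) (u : vec) : \bar R :=
  ereal_sup [set (dotv y u)%:E | y in Om].

Definition vk (f : vec -> R) (beta : R) (xk : vec) : vec := xk - beta *: grad f xk.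

Definition pk (Om : set vec) (f : vec -> R) (beta : R) (xk z : vec) : \bar R :=
  ((norm2 (z - vk f beta xk)) ^+ 2 / 2)%:E + indic Om z.

Definition qk (Om : set vec) (f : vec -> R) (beta : R) (xk u : vec) : \bar R :=
  ((- ((norm2 (u - vk f beta xk)) ^+ 2 / 2))%:E - supp Om u
     + ((norm2 (vk f beta xk)) ^+ 2 / 2)%:E)%E.

Definition dpk (Om : set vec) (f : vec -> R) (beta : R) (xk z : vec) : \bar R :=
  (pk Om f beta xk xk - pk Om f beta xk z)%E.

(* z_k (with dual point u_k) is an inexact projection at iteration k:
   z_k in Om, Delta p(z_k;x_k) >= 0 and
   (p(x_k) - p(z_k) + w_k) / (p(x_k) - q(u_k) + w_k) >= gamma,
   the ratio condition being written multiplied out (denominator >= 0). *)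
Definition inexact_proj (Om : set vec) (f : vec -> R) (beta gamma wk : R)
    (xk zk uk : vec) : Prop :=
  [/\ Om zk, (0 <= dpk Om f beta xk zk)%E &
      (gamma%:E * (pk Om f beta xk xk - qk Om f beta xk uk + wk%:E)
        <= pk Om f beta xk xk - pk Om f beta xk zk + wk%:E)%E].

Definition igpm_noLS (Om : set vec) (f : vec -> R) (L beta gamma : R)
    (w : nat -> R) (x z u : nat -> vec) : Prop :=
  [/\ 0 < beta <= 1 / L, Om (x 0%N),
      forall k, inexact_proj Om f beta gamma (w k) (x k) (z k) (u k) &
      forall k, x k.+1 = z k].

Definition armijo (f : vec -> R) (eta : R) (xk zk : vec) (a : R) : Prop :=
  f (xk + a *: (zk - xk)) <= f xk + eta * a * dotv (grad f xk) (zk - xk).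

Definition igpm_LS (Om : set vec) (f : vec -> R) (eta alpha beta theta gamma : R)
    (w : nat -> R) (x z u : nat -> vec) (ak : nat -> R) : Prop :=
  [/\ 0 < eta < 1, 0 < alpha <= 1, 0 < beta & 0 < theta < 1] /\
  [/\ Om (x 0%N),
      forall k, inexact_proj Om f beta gamma (w k) (x k) (z k) (u k),
      forall k, [/\ exists i : nat, ak k = theta ^+ i * alpha,
                    armijo f eta (x k) (z k) (ak k) &
                    forall i : nat, armijo f eta (x k) (z k) (theta ^+ i * alpha) ->
                                    theta ^+ i * alpha <= ak k] &
      forall k, x k.+1 = x k + ak k *: (z k - x k)].

End IGPM.

From Pilot Require Import Defs.
From HB Require Import structures.
From mathcomp Require Import all_boot all_order all_algebra.
From mathcomp Require Import all_classical all_reals all_analysis.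
From mathcomp Require Import ring lra.
Set Implicit Arguments. Unset Strict Implicit. Unset Printing Implicit Defensive.
Import Order.TTheory GRing.Theory Num.Theory.
Import numFieldNormedType.Exports.
Local Open Scope classical_set_scope.
Local Open Scope ring_scope.

(* Both variants are descent methods.  The descent lemma (the L/2 bound along
   segments, which stay in the convex set Om where grad f is Lipschitz) shows
   that every step lowers f by a fixed multiple of D_k = Delta p(z_k; x_k) >= 0;
   with line search this is because backtracking keeps the Armijo step above
   min(alpha, theta (1 - eta) / (L beta)).  As f is bounded below, sum D_k is
   finite, so D_k -> 0, and w_k -> 0 as well.  Weak duality q <= p turns the
   inexactness test into gamma (Delta p(y; x_k) + w_k) <= D_k + w_k for every y
   in Om.  Along a subsequence x_k -> xs in the closed set Om, grad f (x_k) ->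
   grad f xs by the Lipschitz bound, and the limit gives Delta p(y; xs) <= 0,
   i.e. xs is the point of Om nearest to xs - beta grad f xs. *)

Section Euclidean.
Variables (R : realType) (n : nat).
Notation vec := 'rV[R]_n.
Implicit Types (a b d u : vec).

Lemma dotvv_ge0 u : 0 <= dotv u u.
Proof. by apply: sumr_ge0 => i _; rewrite -expr2 sqr_ge0. Qed.

Lemma norm2_ge0 u : 0 <= norm2 u.
Proof. exact: sqrtr_ge0. Qed.

Lemma sqr_norm2 u : norm2 u ^+ 2 = dotv u u.
Proof. by rewrite sqr_sqrtr // dotvv_ge0. Qed.

Lemma ler_norm2 a b : (norm2 a <= norm2 b) = (dotv a a <= dotv b b).
Proof. by rewrite -!sqr_norm2 ler_sqr // nnegrE norm2_ge0. Qed.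

Lemma dotvBl a b d : dotv (a - b) d = dotv a d - dotv b d.
Proof. by rewrite /dotv -sumrB; apply: eq_bigr => i _; rewrite !mxE mulrBl. Qed.

Lemma norm2Z (s : R) u : norm2 (s *: u) = `|s| * norm2 u.
Proof.
rewrite /norm2 -sqrtr_sqr -sqrtrM ?sqr_ge0 // /dotv mulr_sumr.
by congr Num.sqrt; apply: eq_bigr => i _; rewrite !mxE mulrACA expr2.
Qed.

Lemma dotv_young a d (c : R) : 0 < c -> 2 * dotv a d <= dotv a a / c + c * dotv d d.
Proof.
move=> c0; rewrite /dotv mulr_sumr mulr_suml mulr_sumr -big_split /=.
apply: ler_sum => i _.
have -> : a 0 i * a 0 i / c + c * (d 0 i * d 0 i) =
          2 * (a 0 i * d 0 i) + (a 0 i - c * d 0 i) ^+ 2 / c.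
  by field; rewrite gt_eqF.
by rewrite lerDl divr_ge0 ?sqr_ge0 ?ltW.
Qed.

Lemma dotv_le_of_norm2_le a d (c : R) : 0 < c -> norm2 a <= c * norm2 d ->
  dotv a d <= c * dotv d d.
Proof.
move=> c0 ad; have := dotv_young a d c0.
have aa : dotv a a <= c ^+ 2 * dotv d d.
  by rewrite -!sqr_norm2 -exprMn ler_sqr // nnegrE ?mulr_ge0 ?norm2_ge0 ?ltW.
have : dotv a a / c <= c * dotv d d by rewrite ler_pdivrMr // mulrC mulrA -expr2.
lra.
Qed.

Lemma coord_le_norm2 a i : `|a 0 i| <= norm2 a.
Proof.
rewrite -ler_sqr ?nnegrE ?norm2_ge0 // sqr_norm2 real_normK ?num_real // expr2.
by rewrite /dotv (bigD1 i) //= lerDl; apply: sumr_ge0 => j _; rewrite -expr2 sqr_ge0.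
Qed.

Lemma normr_le_norm2 a : `|a| <= norm2 a.
Proof.
rewrite [`|a|]mx_normrE; apply: bigmax_le => [|[i j] _]; first exact: norm2_ge0.
by rewrite [i]ord1; exact: coord_le_norm2.
Qed.

Section Limits.
Variables (T : Type) (F : set_system T).
Hypothesis FF : Filter F.

Lemma cvg_dotv (a b : T -> vec) (A B : vec) : a @ F --> A -> b @ F --> B ->
  dotv (a t) (b t) @[t --> F] --> dotv A B.
Proof.
move=> aA bB; apply: cvg_big => [|i _]; first exact: add_continuous.
apply: cvgM.
  apply: (cvg_comp a (fun M : vec => M 0 i) aA); exact: coord_continuous.
apply: (cvg_comp b (fun M : vec => M 0 i) bB); exact: coord_continuous.
Qed.

Lemma cvg_norm2_sub0 (a : T -> vec) (A : vec) : a @ F --> A ->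
  norm2 (a t - A) @[t --> F] --> 0.
Proof.
move=> /subr_cvg0 aA0.
have := cvg_dotv aA0 aA0.
have -> : dotv (0 : vec) 0 = 0 by rewrite /dotv big1 // => i _; rewrite mxE mul0r.
by move=> h; rewrite -sqrtr0; exact: (cvg_comp _ _ h (@sqrt_continuous R _)).
Qed.

Lemma cvg_lipschitz (a b : T -> vec) (A B : vec) (c : R) :
  (forall t, norm2 (b t - B) <= c * norm2 (a t - A)) ->
  a @ F --> A -> b @ F --> B.
Proof.
move=> lip aA; apply/subr_cvg0; apply: norm_cvg0.
have c0 : c * norm2 (a t - A) @[t --> F] --> 0.
  by rewrite -(mulr0 c); apply: cvgM; [exact: cvg_cst | exact: cvg_norm2_sub0].
apply: (squeeze_cvgr _ (cvg_cst 0) c0); apply: nearW => t.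
by rewrite normr_ge0 /=; apply: le_trans (normr_le_norm2 _) (lip t).
Qed.

End Limits.
End Euclidean.

Section Descent.
Variables (R : realType) (n : nat).
Notation vec := 'rV[R]_n.

Lemma convexR_segment (Om : set vec) x y (t : R) :
  convexR Om -> Om x -> Om y -> 0 <= t <= 1 -> Om (x + t *: (y - x)).
Proof.
move=> cO Ox Oy /andP[t0 t1].
have t01' : Itv.spec (@Itv.num_sem R) (Itv.Real `[0%Z, 1%Z]) t.
  by apply/and3P; split; rewrite ?num_real.
have := cO y x (Itv.mk t01'); rewrite !inE => /(_ Oy Ox); congr Om.
change (t *: y + (1 - t) *: x = x + t *: (y - x)).
by rewrite scalerBl scale1r scalerBr addrCA.
Qed.

Lemma diff_dotv_grad (f : vec -> R) y d : 'd f y d = dotv (grad f y) d.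
Proof.
rewrite {1}(row_sum_delta d) linear_sum /dotv; apply: eq_bigr => i _.
by rewrite linearZ /= mxE mulrC.
Qed.

Lemma is_derive_segment (f : vec -> R) x d (s : R) :
  differentiable f (x + s *: d) ->
  is_derive s 1 (fun s => f (x + s *: d)) (dotv (grad f (x + s *: d)) d).
Proof.
move=> df.
have shift_seg : (fun h : R => h^-1 *: (((fun s => f (x + s *: d)) \o shift s) (h *: 1)
            - f (x + s *: d))) =
         (fun h : R => h^-1 *: ((f \o shift (x + s *: d)) (h *: d) - f (x + s *: d))).
  apply/funext => h /=; congr (_ *: (f _ - _)).
  by rewrite [h%:A]mulr1 scalerDl addrCA addrC.
rewrite -diff_dotv_grad -deriveE //; apply: DeriveDef.
  by rewrite /derivable shift_seg; exact: diff_derivable.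
by rewrite /derive shift_seg.
Qed.

Variables (Om : set vec) (f : vec -> R) (L : R).
Hypotheses (Om_convex : convexR Om) (f_diff : forall y, Om y -> differentiable f y).
Hypotheses (L_gt0 : 0 < L)
  (grad_lip : forall y1 y2, Om y1 -> Om y2 ->
     norm2 (grad f y1 - grad f y2) <= L * norm2 (y1 - y2)).

Lemma descent x y (t : R) : Om x -> Om y -> 0 <= t <= 1 ->
  f (x + t *: (y - x)) <= f x + t * dotv (grad f x) (y - x)
                          + L / 2 * t ^+ 2 * dotv (y - x) (y - x).
Proof.
move=> Ox Oy /andP[t0 t1].
set d := y - x; set c := dotv (grad f x) d; set K := L / 2 * dotv d d.
pose phi s := f (x + s *: d) - c * s - K * (s * s).
have Om_seg s : 0 <= s <= t -> Om (x + s *: d).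
  by case/andP=> s0 st; apply: convexR_segment => //; rewrite s0 (le_trans st).
have Dphi s : 0 <= s <= t ->
    is_derive s 1 phi (dotv (grad f (x + s *: d)) d - c - K * (s + s)).
  move=> /Om_seg/f_diff/is_derive_segment Dseg; apply: is_derive_eq.
  by rewrite /GRing.scale /= !mulr1.
suff : phi t <= phi 0.
  by rewrite /phi scale0r addr0 !mul0r mulr0 !subr0 /K expr2; lra.
apply: (@ler0_derive1_le_cc R phi 0 t); rewrite ?in_itv /= ?lexx ?t0 //.
- move=> s; rewrite in_itv /= => /andP[s0 st].
  by have [] := Dphi s; rewrite ?ltW.
- move=> s; rewrite in_itv /= => /andP[s0 st].
  have s0t : 0 <= s <= t by rewrite !ltW.
  have Ds := Dphi s s0t; rewrite derive1E derive_val /c -dotvBl subr_le0 /K.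
  have : dotv (grad f (x + s *: d) - grad f x) d <= L * s * dotv d d.
    apply: dotv_le_of_norm2_le; first by rewrite mulr_gt0.
    have := grad_lip (Om_seg s s0t) Ox.
    by rewrite [x + s *: d - x]addrC addKr norm2Z (ger0_norm (ltW s0)) mulrA.
  suff -> : L * s * dotv d d = L / 2 * dotv d d * (s + s) by [].
  by field.
- apply: (@derivable_within_continuous _ _ _ `[0, t]) => s.
  by rewrite in_itv /= => /Dphi [].
Qed.

End Descent.

Section InexactProjection.
Variables (R : realType) (n : nat).
Notation vec := 'rV[R]_n.
Variables (Om : set vec) (f : vec -> R) (beta : R).

Definition pk_fin (x z : vec) : R := dotv (z - vk f beta x) (z - vk f beta x) / 2.

Definition dpk_fin (x z : vec) : R := pk_fin x x - pk_fin x z.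

Lemma pkE x z : Om z -> pk Om f beta x z = (pk_fin x z)%:E.
Proof. by move=> Oz; rewrite /pk /Defs.indic (asboolT Oz) adde0 sqr_norm2. Qed.

Lemma dpkE x z : Om x -> Om z -> dpk Om f beta x z = (dpk_fin x z)%:E.
Proof. by move=> Ox Oz; rewrite /dpk !pkE. Qed.

Lemma dpk_finE x z :
  dpk_fin x z = - (dotv (z - x) (z - x) / 2 + beta * dotv (grad f x) (z - x)).
Proof.
rewrite /dpk_fin /pk_fin /vk /dotv !mulr_suml mulr_sumr -sumrB -big_split -sumrN.
by apply: eq_bigr => i _; rewrite !mxE /=; field.
Qed.

Lemma fenchel_young_dist2 (y u v : vec) :
  - (dotv (u - v) (u - v) / 2) - dotv y u + dotv v v / 2 <= dotv (y - v) (y - v) / 2.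
Proof.
rewrite /dotv !mulr_suml -sumrN -!sumrB -big_split /=; apply: ler_sum => i _.
rewrite !mxE.
have -> : - ((u 0 i - v 0 i) * (u 0 i - v 0 i) / 2) - y 0 i * u 0 i + v 0 i * v 0 i / 2 =
   (y 0 i - v 0 i) * (y 0 i - v 0 i) / 2 - (y 0 i - v 0 i + u 0 i) ^+ 2 / 2 by field.
by rewrite lerBlDr lerDl divr_ge0 // sqr_ge0.
Qed.

Lemma qk_le_pk x u y : (qk Om f beta x u <= pk Om f beta x y)%E.
Proof.
have [Oy|nOy] := pselect (Om y); last first.
  by rewrite /pk /Defs.indic (asboolF nOy) addey ?leey.
have : ((dotv y u)%:E <= supp Om u)%E by apply: ereal_sup_ubound; exists y.
rewrite pkE // /qk; case: (supp Om u) => [r| |] //=; last by rewrite leNye.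
rewrite lee_fin -EFinB -EFinD lee_fin !sqr_norm2 => yu.
by have := fenchel_young_dist2 y u (vk f beta x); rewrite /pk_fin; lra.
Qed.

Lemma inexact_proj_dpk_ge0 (gamma wk : R) x z u : Om x ->
  inexact_proj Om f beta gamma wk x z u -> Om z /\ 0 <= dpk_fin x z.
Proof. by move=> Ox [Oz]; rewrite dpkE // lee_fin. Qed.

Lemma inexact_proj_gap (gamma wk : R) x z u y : Om x -> Om y -> 0 <= gamma ->
  inexact_proj Om f beta gamma wk x z u ->
  gamma * (dpk_fin x y + wk) <= dpk_fin x z + wk.
Proof.
move=> Ox Oy g0 [Oz _ gap].
have qk_le : (gamma%:E * ((pk_fin x x)%:E - (pk_fin x y)%:E + wk%:E) <=
              gamma%:E * (pk Om f beta x x - qk Om f beta x u + wk%:E))%E.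
  rewrite pkE //; apply: lee_wpmul2l; first by rewrite lee_fin.
  by apply/leeD2r/leeB => //; rewrite -pkE //; exact: qk_le_pk.
by move: (le_trans qk_le gap); rewrite !pkE // -!EFinB -!EFinD -EFinM lee_fin.
Qed.

Lemma is_proj_dpk_fin_le0 x : Om x -> (forall y, Om y -> dpk_fin x y <= 0) ->
  is_proj Om (vk f beta x) x.
Proof.
move=> Ox le0; split => // y /le0; rewrite subr_le0 /pk_fin ler_norm2.
by rewrite ler_pM2r ?invr_gt0.
Qed.

End InexactProjection.

(* [G] and [N] stand for <grad f x_k, d_k> and |d_k|^2; [N / 2 + beta * G <= 0]
   is Delta p(z_k; x_k) >= 0. *)
Lemma armijo_fail_step_gt (R : realFieldType) (eta L beta t G N : R) :
  eta < 1 -> 0 < L -> 0 < beta -> 0 < t -> 0 <= N -> N / 2 + beta * G <= 0 ->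
  eta * t * G < t * G + L / 2 * t ^+ 2 * N -> (1 - eta) / (L * beta) < t.
Proof.
move=> eta1 L0 b0 t0 N0 GN armijo_fails.
have {armijo_fails} : eta * G < G + L / 2 * t * N.
  rewrite -(ltr_pM2l t0); congr (_ < _): armijo_fails; ring.
rewrite ltr_pdivrMr ?mulr_gt0 // => fails.
have : 0 < beta * ((1 - eta) * G + L / 2 * t * N) by rewrite mulr_gt0 //; lra.
nra.
Qed.

Section SufficientDecrease.
Variables (R : realType) (n : nat).
Notation vec := 'rV[R]_n.
Variables (Om : set vec) (f : vec -> R) (L beta gamma : R) (w : nat -> R).
Variables (x z u : nat -> vec).
Hypotheses (Om_convex : convexR Om) (f_diff : forall y, Om y -> differentiable f y).
Hypotheses (L_gt0 : 0 < L)
  (grad_lip : forall y1 y2, Om y1 -> Om y2 ->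
     norm2 (grad f y1 - grad f y2) <= L * norm2 (y1 - y2)).

Let D k := dpk_fin f beta (x k) (z k).

Lemma igpm_noLS_in : igpm_noLS Om f L beta gamma w x z u -> forall k, Om (x k).
Proof. by case=> _ Ox0 inexact xS [|k] //; rewrite xS; case: (inexact k). Qed.

Lemma igpm_noLS_decrease : igpm_noLS Om f L beta gamma w x z u ->
  exists2 C : R, 0 < C & forall k, f (x k.+1) <= f (x k) - C * D k.
Proof.
move=> igpm; have Ox := igpm_noLS_in igpm.
case: igpm => /andP[b0 bL] _ inexact xS.
exists beta^-1 => [|k]; first by rewrite invr_gt0.
have [Oz _] := inexact k; rewrite xS /D dpk_finE.
have := descent Om_convex f_diff L_gt0 grad_lip (Ox k) Oz (t := 1).
rewrite ler01 lexx scale1r addrC subrK expr1n !mul1r mulr1 => /(_ isT).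
set G := dotv (grad f (x k)) _; set N := dotv (z k - x k) _.
have LN : L * N <= N / beta.
  rewrite ler_pdivlMr // in bL; rewrite ler_pdivlMr //.
  have := dotvv_ge0 (z k - x k); rewrite -/N; nra.
have -> : f (x k) - beta^-1 * - (N / 2 + beta * G) = f (x k) + G + N / beta / 2.
  by field; rewrite gt_eqF.
lra.
Qed.

Section LineSearch.
Variables (eta alpha theta : R) (ak : nat -> R).
Hypothesis igpm : igpm_LS Om f eta alpha beta theta gamma w x z u ak.

Lemma igpm_LS_step_in k : 0 < ak k <= 1.
Proof.
case: igpm => [[_ /andP[a0 a1] _ /andP[t0 t1]] [_ _ /(_ k)[[i ->] _ _] _]].
by rewrite mulr_gt0 ?exprn_gt0 //= mulr_ile1 ?exprn_ge0 ?exprn_ile1 // ltW.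
Qed.

Lemma igpm_LS_in k : Om (x k).
Proof.
case: igpm => _ [Ox0 inexact _ xS]; elim: k => // k Oxk.
rewrite xS; apply: convexR_segment => //; first by case: (inexact k).
by have /andP[a0 ->] := igpm_LS_step_in k; rewrite ltW.
Qed.

Lemma igpm_LS_step_ge k : Num.min alpha (theta * (1 - eta) / (L * beta)) <= ak k.
Proof.
case: igpm => [[/andP[_ e1] /andP[a0 a1] b0 /andP[t0 t1]]
               [_ inexact /(_ k)[[[|j] ak_eq] _ ak_max] _]].
  by rewrite ak_eq expr0 mul1r ge_min lexx.
set t := theta ^+ j * alpha.
have ak_eq' : ak k = theta * t by rewrite ak_eq exprS mulrA.
have t0' : 0 < t by rewrite mulr_gt0 ?exprn_gt0.
have armijo_fails : ~ armijo f eta (x k) (z k) t.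
  move=> /ak_max; rewrite ak_eq' => t_le.
  by move: t_le; rewrite leNgt gtr_pMl // t1.
have [Oz /[!dpk_finE] dz] := inexact_proj_dpk_ge0 (igpm_LS_in k) (inexact k).
have t_in : 0 <= t <= 1.
  rewrite (ltW t0') /t mulr_ile1 ?exprn_ge0 ?exprn_ile1 ?(ltW a0) //; exact: ltW.
have := descent Om_convex f_diff L_gt0 grad_lip (igpm_LS_in k) Oz t_in.
move: armijo_fails; rewrite /armijo => /negP; rewrite -ltNge => fails desc.
have /ltW t_gt : (1 - eta) / (L * beta) < t.
  apply: (armijo_fail_step_gt (G := dotv (grad f (x k)) (z k - x k))
           e1 L_gt0 b0 t0' (dotvv_ge0 (z k - x k))).
    by rewrite -oppr_ge0.
  by rewrite -(ltrD2l (f (x k))) addrA; exact: lt_le_trans fails desc.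
by rewrite ge_min ak_eq' -mulrA ler_pM2l // t_gt orbT.
Qed.

Lemma igpm_LS_decrease :
  exists2 C : R, 0 < C & forall k, f (x k.+1) <= f (x k) - C * D k.
Proof.
case: igpm => [[/andP[e0 e1] /andP[a0 _] b0 /andP[t0 _]] [_ inexact step xS]].
set c := Num.min alpha (theta * (1 - eta) / (L * beta)).
have c0 : 0 < c by rewrite lt_min a0 /= divr_gt0 ?mulr_gt0 ?subr_gt0.
exists (eta * c / beta); first by rewrite !mulr_gt0 ?invr_gt0.
move=> k; have [_ armijo _] := step k.
have [_ /[!dpk_finE] dz] := inexact_proj_dpk_ge0 (igpm_LS_in k) (inexact k).
rewrite xS /D dpk_finE; apply: le_trans armijo _; rewrite lerD2l.
move: dz (dotvv_ge0 (z k - x k)) (igpm_LS_step_ge k); rewrite -/c.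
move: (dotv (grad f (x k)) _) (dotv (z k - x k) _) (ak k) => G N a dz N0 ca.
have G0 : G <= 0 by rewrite -(pmulr_rle0 _ b0); lra.
have -> : - (eta * c / beta * - (N / 2 + beta * G)) =
          eta * c * G + eta * c * (N / 2 / beta).
  by field; rewrite gt_eqF.
have e0' := ltW e0; have c0' := ltW c0.
rewrite -[leLHS]addr0 lerD ?mulr_ge0 ?divr_ge0 ?invr_ge0 ?(ltW b0) //.
by rewrite ler_wnM2r // ler_wpM2l.
Qed.

End LineSearch.

End SufficientDecrease.

Lemma cvg_subseq {T : topologicalType} (v : nat -> T) (l : T) (phi : nat -> nat) :
  {homo phi : i j / (i < j)%N >-> (i < j)%N} -> v @ \oo --> l -> (v \o phi) @ \oo --> l.
Proof.
move=> phi_incr vl; apply: cvg_comp vl.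
have phi_ge k : (k <= phi k)%N.
  by elim: k => // k IH; apply: leq_ltn_trans IH (phi_incr _ _ _).
apply/cvgnyPge => N; near=> k; apply: leq_trans (phi_ge k).
by near: k; exact: nbhs_infty_ge.
Unshelve. all: end_near. Qed.

Lemma nneseries_bounded_cvg0 (R : realType) (v : nat -> R) (M : R) :
  (forall k, 0 <= v k) -> (forall N, \sum_(k < N) v k <= M) -> v @ \oo --> 0.
Proof.
move=> v0 vM; apply: cvg_series_cvg_0; apply: nondecreasing_is_cvgn.
  by apply/nondecreasing_seqP => k; rewrite /series /= big_nat_recr //= lerDl.
by exists M => _ [N _ <-]; rewrite /series /= big_mkord.
Qed.

Section Stationarity.
Variables (R : realType) (n : nat).
Notation vec := 'rV[R]_n.
Variables (Om : set vec) (f : vec -> R) (L beta gamma : R) (w : nat -> R).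
Variables (x z u : nat -> vec).
Hypotheses (Om_closed : closed Om)
  (grad_lip : forall y1 y2, Om y1 -> Om y2 ->
     norm2 (grad f y1 - grad f y2) <= L * norm2 (y1 - y2)).
Hypotheses (x_in : forall k, Om (x k))
  (inexact : forall k, inexact_proj Om f beta gamma (w k) (x k) (z k) (u k)).

Let D k := dpk_fin f beta (x k) (z k).

Lemma dpk_fin_cvg0 (C fbar : R) : 0 < C -> (forall y, Om y -> fbar <= f y) ->
  (forall k, f (x k.+1) <= f (x k) - C * D k) -> D @ \oo --> 0.
Proof.
move=> C0 f_lb decrease.
have D0 k : 0 <= D k by have [] := inexact_proj_dpk_ge0 (x_in k) (inexact k).
apply: (@nneseries_bounded_cvg0 _ _ ((f (x 0%N) - fbar) / C)) => // N.
have telescope : C * \sum_(k < N) D k <= f (x 0%N) - f (x N).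
  elim: N => [|N IH]; first by rewrite big_ord0 mulr0 subrr.
  by rewrite big_ord_recr mulrDr /=; have := decrease N; lra.
rewrite ler_pdivlMr // mulrC; apply: le_trans telescope _.
by rewrite lerD2l lerN2 f_lb.
Qed.

Lemma cvg_dpk_fin (a : nat -> vec) (A y : vec) :
  a @ \oo --> A -> grad f (a k) @[k --> \oo] --> grad f A ->
  dpk_fin f beta (a k) y @[k --> \oo] --> dpk_fin f beta A y.
Proof.
move=> aA gA; rewrite dpk_finE; under eq_fun do rewrite dpk_finE.
have yaA : (fun k => y - a k) @ \oo --> y - A by apply: cvgB => //; exact: cvg_cst.
apply: cvgN; apply: cvgD; first by apply: cvgM; [exact: cvg_dotv | exact: cvg_cst].
by apply: cvgM; [exact: cvg_cst | exact: cvg_dotv].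
Qed.

Lemma limit_point_is_proj (phi : nat -> nat) (xs : vec) : 0 < gamma ->
  w @ \oo --> 0 -> D @ \oo --> 0 ->
  {homo phi : i j / (i < j)%N >-> (i < j)%N} -> (x \o phi) @ \oo --> xs ->
  is_proj Om (vk f beta xs) xs.
Proof.
move=> gamma0 w0 D0 phi_incr xs_lim.
have Oxs : Om xs.
  apply: (@closed_cvg _ _ _ _ (x \o phi) Om Om_closed _ xs xs_lim).
  by apply: nearW => k; exact: x_in.
have g_lim : grad f (x (phi k)) @[k --> \oo] --> grad f xs.
  by apply: cvg_lipschitz xs_lim => k; exact: grad_lip.
apply: is_proj_dpk_fin_le0 => // y Oy.
have lhs_lim : gamma * (dpk_fin f beta (x (phi k)) y + w (phi k)) @[k --> \oo] -->
               gamma * (dpk_fin f beta xs y + 0).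
  apply: cvgM; first exact: cvg_cst.
  by apply: cvgD; [exact: cvg_dpk_fin | exact: cvg_subseq].
have rhs_lim : D (phi k) + w (phi k) @[k --> \oo] --> 0 + 0.
  by apply: cvgD; exact: cvg_subseq.
have : gamma * (dpk_fin f beta xs y + 0) <= 0 + 0.
  apply: (ler_cvg_to lhs_lim rhs_lim); apply: nearW => k.
  exact: inexact_proj_gap (x_in _) Oy (ltW gamma0) (inexact (phi k)).
by rewrite !addr0 pmulr_rle0.
Qed.

End Stationarity.

Theorem theorem3p4 (R : realType) (n : nat) (Om : set 'rV[R]_n)
    (f : 'rV[R]_n -> R) (L beta gamma : R) (w : nat -> R)
    (x z u : nat -> 'rV[R]_n) :
  Om !=set0 -> closed Om -> convexR Om ->
  (forall y, Om y -> differentiable f y) ->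
  (exists fbar : R, forall y, Om y -> fbar <= f y) ->
  0 < L ->
  (forall y1 y2, Om y1 -> Om y2 ->
     norm2 (grad f y1 - grad f y2) <= L * norm2 (y1 - y2)) ->
  (forall k, 0 <= w k) ->
  (\sum_(k <oo) (w k)%:E < +oo)%E ->
  0 < gamma < 1 ->
  (igpm_noLS Om f L beta gamma w x z u \/
   exists (eta alpha theta : R) (ak : nat -> R),
     igpm_LS Om f eta alpha beta theta gamma w x z u ak) ->
  forall xs : 'rV[R]_n,
    (exists phi : nat -> nat, {homo phi : i j / (i < j)%N >-> (i < j)%N} /\
        (x \o phi) @ \oo --> xs) ->
    is_proj Om (xs - beta *: grad f xs) xs.
Proof.
move=> _ Om_closed Om_convex f_diff [fbar f_lb] L_gt0 grad_lip w_ge0 w_fin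
  /andP[gamma0 _] igpm xs [phi [phi_incr xs_lim]].
have [x_in inexact [C C0 decrease]] :
    [/\ forall k, Om (x k),
         forall k, inexact_proj Om f beta gamma (w k) (x k) (z k) (u k) &
         exists2 C : R, 0 < C &
           forall k, f (x k.+1) <= f (x k) - C * dpk_fin f beta (x k) (z k)].
  case: igpm => [igpm | [eta [alpha [theta [ak igpm]]]]].
  - split; [exact: igpm_noLS_in igpm | by case: igpm |].
    exact: (igpm_noLS_decrease Om_convex f_diff L_gt0 grad_lip igpm).
  - split; [exact: igpm_LS_in igpm | by case: igpm => _ [] |].
    exact: (igpm_LS_decrease Om_convex f_diff L_gt0 grad_lip igpm).
apply: (limit_point_is_proj Om_closed grad_lip x_in inexact gamma0 _ _ phi_incr xs_lim).
- exact: cvg_series_cvg_0 (nnseries_is_cvg w_ge0 w_fin).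
- exact: (dpk_fin_cvg0 x_in inexact C0 f_lb decrease).
Qed.
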